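(* For every finite nonempty set of points $Z\subset\mathbb{S}_1$ and every positive integer $m$ one has $\alpha(mZ)<\alpha((m+5)Z)$.
   Context: Let $P_1\in\mathbb{P}^2(\mathbb{C})$ be a point and $f\colon\mathbb{S}_1\to\mathbb{P}^2$ the blow-up of $\mathbb{P}^2$ at $P_1$, with exceptional curve $E_1=f^{-1}(P_1)$; let $H$ be the pullback of the class of a line. Let $\mathbb{L}_1=3H-E_1=-K_{\mathbb{S}_1}$. For a finite set $Z\subset\mathbb{S}_1$ with ideal sheaf $\mathcal{I}_Z$ and a positive integer $m$, the initial degree is $\alpha(mZ)=\min\{d\ge 0:\ H^0(\mathbb{S}_1,d\mathbb{L}_1\otimes\mathcal{I}_Z^{(m)})\neq 0\}$, i.e. the least $d$ such that some effective divisor $D\in|d\mathbb{L}_1|$ has multiplicity at least $m$ at every point of $Z$. *)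

From mathcomp Require Import all_boot all_algebra.
From mathcomp Require Import complex Rstruct.
From mathcomp Require Import mpoly.

Set Implicit Arguments.
Unset Strict Implicit.
Unset Printing Implicit Defensive.

Import GRing.Theory.
Local Open Scope ring_scope.

Definition C : Type := (Rdefinitions.R)[i].

(* Homogeneous coordinates: a point of P^2(C) is represented by a nonzero
   column vector in C^3.  Homogeneous polynomials in x_0,x_1,x_2 are
   elements of {mpoly C[3]}. *)
Definition vec3 := 'cV[C]_3.

(* A polynomial G in k variables vanishes to order >= m at the origin:
   every monomial occurring in G has total degree >= m (vacuous if G = 0). *)
Definition vanish_ord (k : nat) (G : {mpoly C[k]}) (m : nat) : Prop :=
  forall mon, mon \in msupp G -> (m <= mdeg mon)%N.

(* Translation X |-> q + X, used to compute multiplicities at the point [q]: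
   for a homogeneous F, mult_[q](V(F)) = order of F(q + X) at X = 0
   (multiplicity of the affine cone at the non-vertex point q). *)
Definition shift3 (q : vec3) : 3.-tuple {mpoly C[3]} :=
  [tuple (q i ord0)%:MP + 'X_i | i < 3].

(* Local chart of the blow-up at p around a point of the exceptional curve.
   A is a frame (basis) of C^3 whose column 0 is p; with v := col 1 A and
   w := col 2 A, the chart is (u,t) |-> [p + u v + u t w], whose exceptional
   curve is {u = 0}, and the point (0,0) is the tangent direction of the line
   through [p] and [v]. *)
Definition chart (A : 'M[C]_3) : 3.-tuple {mpoly C[2]} :=
  [tuple (A i 0)%:MP
         + 'X_(ord0 : 'I_2) * (A i 1)%:MP
         + 'X_(ord0 : 'I_2) * 'X_(ord_max : 'I_2) * (A i 2)%:MP | i < 3].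

(* Points of S_1 = Bl_{P_1} P^2:
   - OffE q : the point of S_1 over [q] in P^2 \ {P_1};
   - OnE A  : the point of E_1 given by the tangent direction of the line
              through P_1 and [col 1 A] (A a frame with col 0 A = P_1).  *)
Inductive S1pt : Type :=
  | OffE of vec3
  | OnE of 'M[C]_3.

(* Validity of the representation, relative to P_1 = [p]. *)
Definition valid_pt (p : vec3) (x : S1pt) : Prop :=
  match x with
  | OffE q => \rank (row_mx p q) = 2%N          (* q <> 0 and [q] <> [p] *)
  | OnE A => A \in unitmx /\ col 0 A = p
  end.

(* A nonzero element of H^0(S_1, d L_1) = H^0(S_1, 3dH - dE_1) is given by
   a nonzero form F of degree 3d with mult_{P_1} F >= d; its divisor is
   D = f^*V(F) - d E_1. *)
Definition is_section (p : vec3) (d : nat) (F : {mpoly C[3]}) : Prop :=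
  [/\ F != 0, F \is (3 * d)%N.-homog & vanish_ord (comp_mpoly (shift3 p) F) d].

(* mult_x(D) >= m, for D = f^*V(F) - d E_1.  Off E_1 this is the
   multiplicity of V(F) at [q]; on E_1, in the chart (u,t), the local equation
   of D is u^{-d} F(p + u v + u t w), whose order is ord(F(chart)) - d. *)
Definition mult_ge (d : nat) (F : {mpoly C[3]}) (x : S1pt) (m : nat) : Prop :=
  match x with
  | OffE q => vanish_ord (comp_mpoly (shift3 q) F) m
  | OnE A => vanish_ord (comp_mpoly (chart A) F) (m + d)
  end.

Definition has_section (p : vec3) (m : nat) (Z : seq S1pt) (d : nat) : Prop :=
  exists F, is_section p d F /\ forall x, List.In x Z -> mult_ge d F x m.

(* a = alpha(mZ): the least d with H^0(S_1, d L_1 (x) I_Z^{(m)}) <> 0. *)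
Definition is_alpha (p : vec3) (m : nat) (Z : seq S1pt) (a : nat) : Prop :=
  has_section p m Z a /\ forall d, has_section p m Z d -> (a <= d)%N.

From mathcomp Require Import all_boot all_algebra.
From mathcomp Require Import complex Rstruct.
From mathcomp Require Import mpoly.
From mathcomp Require Import ring zify.
From Stdlib Require Import Classical Wf_nat.

Set Implicit Arguments.
Unset Strict Implicit.
Unset Printing Implicit Defensive.

Import GRing.Theory Num.Theory.
Local Open Scope ring_scope.

(* Let F be a form of degree 3b with multiplicity >= b at P_1, giving a section
   of b L_1 with multiplicity >= m + 5 on Z.  A directional derivative lowers
   the degree of a form by one, its multiplicity at any point of P^2 by at most
   one, and the order of its pull-back to a chart of the blow-up by at most
   two.  At P_1 we differentiate along P_1 itself: by Euler's formula this
   keeps the multiplicity, unless that derivative is zero, in which case F is a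
   cone with vertex P_1 and any nonzero partial derivative has multiplicity
   equal to its degree.  Three such derivatives give a form of degree 3(b - 1)
   with multiplicity >= b - 1 at P_1, >= m + 2 at the points of Z off E_1, and
   chart order >= m + 5 + b - 6 = m + (b - 1) at the points on E_1: a section
   of (b - 1) L_1 with multiplicity >= m on Z.  Hence
   alpha(mZ) <= alpha((m+5)Z) - 1, where alpha((m+5)Z) > 0 because nonzero
   constants vanish nowhere. *)

Section VanishOrder.
Variable k : nat.
Implicit Types G H : {mpoly C[k]}.

Lemma vanish_ordE G a :
  vanish_ord G a <-> (forall mon, (mdeg mon < a)%N -> G@_mon = 0).
Proof.
split=> [h mon lt|h mon].
  by apply/eqP; rewrite mcoeff_eq0; apply/negP=> /h; rewrite leqNgt lt.
by rewrite mcoeff_msupp; case: ltnP => // /h ->; rewrite eqxx.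
Qed.

Lemma vanish_ord0 G : vanish_ord G 0.
Proof. by []. Qed.

Lemma vanish_ordW G a b : (b <= a)%N -> vanish_ord G a -> vanish_ord G b.
Proof. by move=> ba h mon /h; apply: leq_trans. Qed.

Lemma vanish_ordD G H a :
  vanish_ord G a -> vanish_ord H a -> vanish_ord (G + H) a.
Proof.
move=> /vanish_ordE hG /vanish_ordE hH; apply/vanish_ordE=> mon lt.
by rewrite mcoeffD hG // hH // addr0.
Qed.

Lemma vanish_ordZ c G a : vanish_ord G a -> vanish_ord (c *: G) a.
Proof.
move=> /vanish_ordE hG; apply/vanish_ordE=> mon lt.
by rewrite mcoeffZ hG // mulr0.
Qed.

Lemma vanish_ordB G H a :
  vanish_ord G a -> vanish_ord H a -> vanish_ord (G - H) a.
Proof.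
by move=> hG hH; apply: vanish_ordD => //; rewrite -scaleN1r; apply: vanish_ordZ.
Qed.

Lemma vanish_ord_sum (I : Type) (r : seq I) (F : I -> {mpoly C[k]}) a :
  (forall i, vanish_ord (F i) a) -> vanish_ord (\sum_(i <- r) F i) a.
Proof.
move=> h; elim/big_ind: _ => [mon|G H|//]; [by rewrite msupp0|exact: vanish_ordD].
Qed.

Lemma vanish_ordM G H a b :
  vanish_ord G a -> vanish_ord H b -> vanish_ord (G * H) (a + b).
Proof.
move=> hG hH mon /msuppM_le /allpairsP [[m1 m2] [/= /hG h1 /hH h2 ->]].
by rewrite mdegD leq_add.
Qed.

Lemma vanish_ordXn G a j : vanish_ord G a -> vanish_ord (G ^+ j) (a * j).
Proof.
move=> h; elim: j => [|j IH]; first by rewrite muln0.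
by rewrite exprS mulnS; apply: vanish_ordM.
Qed.

Lemma vanish_ord_prod (I : Type) (r : seq I) (F : I -> {mpoly C[k]}) :
  (forall x, List.In x r -> vanish_ord (F x) 1) ->
  vanish_ord (\prod_(x <- r) F x) (size r).
Proof.
elim: r => [|x r IH] h; first by rewrite big_nil.
rewrite big_cons /= -add1n; apply: vanish_ordM; first by apply: h; left.
by apply: IH => y yr; apply: h; right.
Qed.

Lemma vanish_ord_prod_mem (I : Type) (r : seq I) (F : I -> {mpoly C[k]}) x a :
  List.In x r -> vanish_ord (F x) a -> vanish_ord (\prod_(y <- r) F y) a.
Proof.
elim: r => [//|y r IH] /= [->|xr] h; rewrite big_cons.
  by rewrite -[a]addn0; apply: vanish_ordM.
by rewrite -[a]add0n; apply: vanish_ordM (IH xr h).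
Qed.

Lemma vanish_ordXM i G a : vanish_ord G a -> vanish_ord ('X_i * G) a.+1.
Proof.
move=> h; rewrite -add1n; apply: vanish_ordM h => mon.
by rewrite msuppX inE => /eqP ->; rewrite mdeg1.
Qed.

Lemma vanish_ordXMK i G a : vanish_ord ('X_i * G) a -> vanish_ord G a.-1.
Proof.
move=> /vanish_ordE h; apply/vanish_ordE=> mon lt.
rewrite -(mcoeffMX G U_(i)) mulrC h // mdegD mdeg1; lia.
Qed.

Lemma vanish_ord1 G : vanish_ord G 1 <-> G@_0%MM = 0.
Proof.
rewrite vanish_ordE; split=> [-> //|h mon]; first by rewrite mdeg0.
by rewrite ltnS leqn0 mdeg_eq0 => /eqP ->.
Qed.

Lemma vanish_ordC c a : (0 < a)%N -> vanish_ord (c%:MP : {mpoly C[k]}) a -> c = 0.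
Proof.
move=> a0 /vanish_ordE /(_ 0%MM); rewrite mdeg0 mcoeffC eqxx mulr1; exact.
Qed.

Lemma vanish_ord_mderiv G a i : vanish_ord G a -> vanish_ord G^`M(i) a.-1.
Proof.
move=> /vanish_ordE h; apply/vanish_ordE=> mon lt.
rewrite mcoeff_deriv h ?mul0rn // mdegD mdeg1; lia.
Qed.

End VanishOrder.

Section Euler.
Variables (k : nat) (R : comNzRingType).
Implicit Types G : {mpoly R[k]}.

Lemma mderivXU (i j : 'I_k) : ('X_i : {mpoly R[k]})^`M(j) = (i == j)%:R.
Proof.
rewrite mderivX mnm1E; case: eqP => [->|_]; last by rewrite scale0r.
by rewrite -{1}[U_(j)%MM]add0m addmK mpolyX0 scale1r.
Qed.

Lemma mcoeff_mulX_mderiv G (j : 'I_k) mon :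
  ('X_j * G^`M(j))@_mon = G@_mon *+ mon j.
Proof.
have [e0|pos] := posnP (mon j).
  rewrite e0 mulr0n; apply: memN_msupp_eq0; rewrite mulrC (perm_mem (msuppMX _ _)).
  by apply/mapP=> -[m' _ e]; move: e0; rewrite e mnmDE mnm1E eqxx.
have e : mon = (U_(j) + (mon - U_(j)))%MM.
  by rewrite addmC submK //; apply/mnm_lepP=> l; rewrite mnm1E; case: eqP => // <-.
rewrite [in LHS]e mulrC mcoeffMX mcoeff_deriv addmC -e mnmBE mnm1E eqxx.
by rewrite subn1 prednK.
Qed.

Lemma mcoeff_euler G mon :
  (\sum_(j < k) 'X_j * G^`M(j))@_mon = G@_mon *+ mdeg mon.
Proof.
rewrite raddf_sum mdegE -sumrMnr; apply: eq_bigr => j _.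
exact: mcoeff_mulX_mderiv.
Qed.

Lemma euler_dhomog G d : G \is d.-homog ->
  \sum_(j < k) 'X_j * G^`M(j) = d%:R *: G.
Proof.
move=> /dhomogP hG; apply/mpolyP=> mon; rewrite mcoeff_euler mcoeffZ mulr_natl.
by have [/hG ->|/memN_msupp_eq0 ->] := boolP (mon \in msupp G); rewrite ?mul0rn.
Qed.

Lemma dhomog_mderiv G d (j : 'I_k) : G \is d.-homog -> G^`M(j) \is d.-1.-homog.
Proof.
move=> /dhomogP hG; apply/dhomogP=> mon; rewrite mcoeff_msupp mcoeff_deriv => nz.
have : (mon + U_(j))%MM \in msupp G.
  by rewrite mcoeff_msupp; apply: contraNneq nz => ->; rewrite mul0rn.
by move/hG; rewrite /= mdegD mdeg1 addn1 => <-.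
Qed.

End Euler.

Lemma exists_mderiv_neq0 (k : nat) (R : fieldType) (G : {mpoly R[k]}) d :
  G != 0 -> G \is d.-homog -> d%:R != 0 :> R -> exists j : 'I_k, G^`M(j) != 0.
Proof.
move=> nzG hG d0; apply/existsP; apply: contraT; rewrite negb_exists => /forallP h0.
have := euler_dhomog hG; rewrite big1 => [|j _]; last first.
  by move: (h0 j); rewrite negbK => /eqP ->; rewrite mulr0.
by move/esym/eqP; rewrite scaler_eq0 (negbTE nzG) (negbTE d0).
Qed.

Section ChainRule.
Variables (n k : nat) (R : comNzRingType) (lq : n.-tuple {mpoly R[k]}) (i : 'I_k).

Let chain_at (F : {mpoly R[n]}) :=
  (F \mPo lq)^`M(i) = \sum_(j < n) (tnth lq j)^`M(i) * (F^`M(j) \mPo lq).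

Let chain_atD F G : chain_at F -> chain_at G -> chain_at (F + G).
Proof.
rewrite /chain_at comp_mpolyD mderivD => -> ->; rewrite -big_split /=.
by apply: eq_bigr => j _; rewrite mderivD comp_mpolyD mulrDr.
Qed.

Let chain_atM F G : chain_at F -> chain_at G -> chain_at (F * G).
Proof.
rewrite /chain_at rmorphM mderivM => -> ->.
rewrite mulr_suml mulr_sumr -big_split /=.
by apply: eq_bigr => j _; rewrite mderivM rmorphD !rmorphM /=; ring.
Qed.

Let chain_atX (j : 'I_n) : chain_at 'X_j.
Proof.
rewrite /chain_at comp_mpolyXU (bigD1 j) //= big1 => [|l nl].
  by rewrite mderivXU eqxx comp_mpoly1 mulr1 addr0 -tnth_nth.
by rewrite mderivXU eq_sym (negbTE nl) comp_mpoly0 mulr0.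
Qed.

Lemma mderiv_comp F :
  (F \mPo lq)^`M(i) = \sum_(j < n) (tnth lq j)^`M(i) * (F^`M(j) \mPo lq).
Proof.
have chain_atC c : chain_at c%:MP.
  rewrite /chain_at comp_mpolyC mderivC big1 // => j _.
  by rewrite mderivC comp_mpolyC mpolyC0 mulr0.
rewrite [F]mpolyE; elim/big_ind: _ => [|G H|mon _]; first exact: (chain_atC 0).
  exact: chain_atD.
rewrite -mul_mpolyC; apply: chain_atM => //; rewrite mpolyXE_id.
elim/big_ind: _ => [|G H|j _]; [exact: (chain_atC 1)|exact: chain_atM|].
by elim: (mon j) => [|e IH]; [exact: (chain_atC 1)|rewrite exprS; apply: chain_atM].
Qed.

End ChainRule.

Definition dderiv (c : vec3) (F : {mpoly C[3]}) : {mpoly C[3]} :=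
  \sum_(j < 3) c j 0 *: F^`M(j).

Lemma dhomog_dderiv c F d : F \is d.-homog -> dderiv c F \is d.-1.-homog.
Proof.
move=> hF; apply: rpred_sum => j _; apply: dhomogZ; exact: dhomog_mderiv.
Qed.

Lemma dderiv_delta (j : 'I_3) F : dderiv (delta_mx j 0) F = F^`M(j).
Proof.
rewrite /dderiv (bigD1 j) //= big1 => [|l nl].
  by rewrite mxE !eqxx scale1r addr0.
by rewrite mxE (negbTE nl) scale0r.
Qed.

Lemma dderiv_mulmx (A : 'M[C]_3) (v : vec3) F :
  dderiv (A *m v) F = \sum_(l < 3) v l 0 *: dderiv (col l A) F.
Proof.
rewrite /dderiv; under [RHS]eq_bigr => l _ do rewrite scaler_sumr.
rewrite exchange_big /=; apply: eq_bigr => j _.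
rewrite mxE scaler_suml; apply: eq_bigr => l _.
by rewrite !mxE scalerA (mulrC (A j l)).
Qed.

Lemma mderiv_shift q F (j : 'I_3) :
  (F \mPo shift3 q)^`M(j) = F^`M(j) \mPo shift3 q.
Proof.
rewrite mderiv_comp (bigD1 j) //= big1 => [|l nl];
  rewrite tnth_mktuple mderivD mderivC add0r mderivXU.
  by rewrite eqxx mul1r addr0.
by rewrite (negbTE nl) mul0r.
Qed.

Lemma dderiv_shift c q F :
  dderiv c F \mPo shift3 q = \sum_(j < 3) c j 0 *: (F \mPo shift3 q)^`M(j).
Proof.
by rewrite raddf_sum; apply: eq_bigr => j _; rewrite /= comp_mpolyZ mderiv_shift.
Qed.

Lemma vanish_ord_dderiv_shift c q F a :
  vanish_ord (F \mPo shift3 q) a -> vanish_ord (dderiv c F \mPo shift3 q) a.-1.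
Proof.
move=> hF; rewrite dderiv_shift; apply: vanish_ord_sum => j.
by apply/vanish_ordZ/vanish_ord_mderiv.
Qed.

Lemma mcoeff_dderiv_shift_self p F d mon : F \is d.-homog ->
  (dderiv p F \mPo shift3 p)@_mon =
  (F \mPo shift3 p)@_mon * (d%:R - (mdeg mon)%:R).
Proof.
move=> hF; set H := F \mPo shift3 p.
have eulerH : \sum_(j < 3) ((p j 0)%:MP + 'X_j) * H^`M(j) = d%:R *: H.
  rewrite -comp_mpolyZ -(euler_dhomog hF) raddf_sum; apply: eq_bigr => j _.
  by rewrite /= rmorphM /= comp_mpolyXU -tnth_nth tnth_mktuple mderiv_shift.
have -> : dderiv p F \mPo shift3 p = d%:R *: H - \sum_(j < 3) 'X_j * H^`M(j).
  rewrite -eulerH dderiv_shift -sumrB; apply: eq_bigr => j _.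
  by rewrite mulrDl addrK mul_mpolyC.
by rewrite mcoeffB mcoeffZ mcoeff_euler mulrBr !mulr_natr mulr_natl.
Qed.

Lemma vanish_ord_dderiv_self p F d a : F \is d.-homog ->
  vanish_ord (F \mPo shift3 p) a -> vanish_ord (dderiv p F \mPo shift3 p) a.
Proof.
move=> hF /vanish_ordE hFa; apply/vanish_ordE => mon lt.
by rewrite (mcoeff_dderiv_shift_self _ _ hF) hFa // mul0r.
Qed.

Lemma dderiv_self_eq0 p F d : F \is d.-homog -> dderiv p F = 0 ->
  vanish_ord (F \mPo shift3 p) d.
Proof.
move=> hF D0; apply/vanish_ordE => mon lt.
have := mcoeff_dderiv_shift_self p mon hF; rewrite D0 comp_mpoly0 mcoeff0.
move/esym/eqP; rewrite mulf_eq0 subr_eq0 eqr_nat => /orP [/eqP //|/eqP ed].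
by rewrite ed ltnn in lt.
Qed.

Lemma exists_dderiv p F d a : F != 0 -> F \is d.-homog -> (0 < d)%N ->
  vanish_ord (F \mPo shift3 p) a ->
  exists c, dderiv c F != 0 /\ vanish_ord (dderiv c F \mPo shift3 p) (minn a d.-1).
Proof.
move=> nzF hF d0 hFa; have [D0|nzD] := eqVneq (dderiv p F) 0; last first.
  exists p; split; first exact: nzD.
  exact: vanish_ordW (geq_minl _ _) (vanish_ord_dderiv_self hF hFa).
have [|j nzj] := exists_mderiv_neq0 nzF hF; first by rewrite pnatr_eq0 -lt0n.
exists (delta_mx j 0); split; first by rewrite dderiv_delta.
apply: vanish_ordW (vanish_ord_dderiv_shift (dderiv_self_eq0 hF D0)).
exact: geq_minr.
Qed.

Section Chart.
Variable A : 'M[C]_3.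
Local Notation u := ('X_(ord0 : 'I_2) : {mpoly C[2]}).
Local Notation t := ('X_(ord_max : 'I_2) : {mpoly C[2]}).

Lemma mderiv_chart_u (j : 'I_3) :
  (tnth (chart A) j)^`M(ord0) = (A j 1)%:MP + t * (A j 2)%:MP.
Proof. by rewrite tnth_mktuple !mderivD !mderivM !mderivC !mderivXU /=; ring. Qed.

Lemma mderiv_chart_t (j : 'I_3) :
  (tnth (chart A) j)^`M(ord_max) = u * (A j 2)%:MP.
Proof. by rewrite tnth_mktuple !mderivD !mderivM !mderivC !mderivXU /=; ring. Qed.

Variables (F : {mpoly C[3]}) (d : nat).
Hypothesis homF : F \is d.-homog.

(* With S_l the pull-back of the derivative of F along column l of A and
   G = F o chart A, the chain rule gives G_t = u S_2 and G_u = S_1 + t S_2, and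
   Euler's formula gives S_0 + u S_1 + u t S_2 = d G; solving for u S_l costs
   one order of vanishing. *)
Lemma vanish_ord_chart_dderiv_col (l : 'I_3) a :
  vanish_ord (F \mPo chart A) a ->
  vanish_ord (u * (dderiv (col l A) F \mPo chart A)) a.-1.
Proof.
move=> hG; set G := F \mPo chart A in hG *.
pose S (l : 'I_3) := dderiv (col l A) F \mPo chart A; rewrite -/(S l).
have expandS l' : S l' = \sum_(j < 3) A j l' *: (F^`M(j) \mPo chart A).
  by rewrite /S raddf_sum; apply: eq_bigr => j _; rewrite /= comp_mpolyZ mxE.
have Gt : G^`M(ord_max) = u * S 2.
  rewrite mderiv_comp expandS mulr_sumr; apply: eq_bigr => j _.
  by rewrite mderiv_chart_t -mulrA mul_mpolyC.
have Gu : G^`M(ord0) = S 1 + t * S 2.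
  rewrite mderiv_comp !expandS mulr_sumr -big_split /=; apply: eq_bigr => j _.
  by rewrite mderiv_chart_u mulrDl -mulrA !mul_mpolyC.
have eulerG : S 0 + u * S 1 + u * t * S 2 = d%:R *: G.
  rewrite -comp_mpolyZ -(euler_dhomog homF) raddf_sum !expandS !mulr_sumr.
  rewrite -!big_split /=.
  apply: eq_bigr => j _; rewrite rmorphM /= comp_mpolyXU -tnth_nth tnth_mktuple.
  by rewrite -!mul_mpolyC; ring.
clearbody S G.
have vGu : vanish_ord (u * G^`M(ord0)) a.
  exact: vanish_ordW (leqSpred a) (vanish_ordXM (vanish_ord_mderiv hG)).
have vGt : vanish_ord (t * G^`M(ord_max)) a.
  exact: vanish_ordW (leqSpred a) (vanish_ordXM (vanish_ord_mderiv hG)).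
have vS2 : vanish_ord (u * S 2) a.-1 by rewrite -Gt; apply: vanish_ord_mderiv.
have vS1 : vanish_ord (u * S 1) a.-1.
  have -> : u * S 1 = u * G^`M(ord0) - t * G^`M(ord_max) by rewrite Gu Gt; ring.
  by apply: vanish_ordW (vanish_ordB vGu vGt); apply: leq_pred.
have vS0 : vanish_ord (u * S 0) a.-1.
  have -> : u * S 0 = u * (d%:R *: G) - u * (u * S 1) - t * (u * (u * S 2)).
    by rewrite -eulerG; ring.
  apply: vanish_ordB; [apply: vanish_ordB|].
  - by apply: vanish_ordW (vanish_ordXM (vanish_ordZ hG)); lia.
  - by apply: vanish_ordW (vanish_ordXM vS1); lia.
  - by apply: vanish_ordW (vanish_ordXM (vanish_ordXM vS2)); lia.
have : l = 0 \/ l = 1 \/ l = 2.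
  by case: l => [[|[|[|//]]] hl]; [left|right; left|right; right]; apply: val_inj.
by case=> [->|[->|->]].
Qed.

Lemma vanish_ord_dderiv_chart c a : A \in unitmx ->
  vanish_ord (F \mPo chart A) a -> vanish_ord (dderiv c F \mPo chart A) a.-2.
Proof.
move=> uA hG; rewrite -[c](mulKVmx uA) dderiv_mulmx raddf_sum.
apply: (@vanish_ordXMK _ ord0); rewrite mulr_sumr; apply: vanish_ord_sum => l.
rewrite /= comp_mpolyZ -scalerAr; apply: vanish_ordZ.
exact: vanish_ord_chart_dderiv_col.
Qed.

End Chart.

(* The form obtained from a section of b L_1 with multiplicity >= n on Z after
   e directional derivatives. *)
Definition lowered_section (p : vec3) (n : nat) (Z : seq S1pt) (b e : nat)
    (F : {mpoly C[3]}) : Prop :=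
  [/\ F != 0, F \is (3 * b - e).-homog,
      vanish_ord (F \mPo shift3 p) (minn b (3 * b - e)) &
      forall x, List.In x Z ->
        match x with
        | OffE q => vanish_ord (F \mPo shift3 q) (n - e)
        | OnE A => vanish_ord (F \mPo chart A) (n + b - e.*2)
        end].

Lemma lowered_section0 p n Z b :
  has_section p n Z b -> exists F, lowered_section p n Z b 0 F.
Proof.
move=> [F [[nzF hF hFp] hZ]]; exists F; split; [exact: nzF|by rewrite subn0| |].
- by rewrite subn0; apply: vanish_ordW hFp; apply: geq_minl.
- by move=> [q|A] /hZ /=; rewrite ?subn0 // addnC.
Qed.

Lemma lowered_sectionS p n Z b e F :
  (forall x, List.In x Z -> valid_pt p x) -> (e < 3 * b)%N ->
  lowered_section p n Z b e F -> exists G, lowered_section p n Z b e.+1 G.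
Proof.
move=> hZ eb [nzF hF hFp hFZ].
have [|c [nzG hGp]] := exists_dderiv nzF hF _ hFp; first by rewrite subn_gt0.
exists (dderiv c F); split; first exact: nzG.
- by rewrite subnS; apply: dhomog_dderiv.
- by apply: vanish_ordW hGp; lia.
move=> [q|A] xZ; have /= := hFZ _ xZ.
  by rewrite subnS; apply: vanish_ord_dderiv_shift.
have [uA _] := hZ _ xZ.
by move/(vanish_ord_dderiv_chart (c := c) hF uA); apply: vanish_ordW; lia.
Qed.

Lemma exists_lowered_section p n Z b e :
  (forall x, List.In x Z -> valid_pt p x) -> (e <= 3 * b)%N ->
  has_section p n Z b -> exists F, lowered_section p n Z b e F.
Proof.
move=> hZ + hs; elim: e => [_|e IH eb]; first exact: lowered_section0 hs.
have [F hF] := IH (ltnW eb); exact: lowered_sectionS hF.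
Qed.

Lemma has_section_pos p n Z b : (0 < n)%N -> Z <> [::] ->
  has_section p n Z b -> (0 < b)%N.
Proof.
case: Z => [//|x Z] n0 _ [F [[nzF hF _] /(_ x (or_introl erefl)) hx]].
rewrite lt0n; apply/eqP => b0; rewrite b0 in hF hx.
have F_const : F = (F@_0%MM)%:MP.
  apply/mpolyP => mon; rewrite mcoeffC; have [->|nm] := eqVneq mon 0%MM.
    by rewrite mulr1.
  by rewrite mulr0 (dhomog_nemf_coeff hF) // mdeg_eq0.
set c := F@_0%MM in F_const.
have c0 : c = 0.
  move: hx; rewrite F_const; case: x => [q|A] /=; rewrite comp_mpolyC => hc.
  - exact: vanish_ordC n0 hc.
  - by apply: vanish_ordC hc; rewrite addn0.
by move: nzF; rewrite F_const c0 eqxx.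
Qed.

Lemma has_section_pred p m Z b :
  (forall x, List.In x Z -> valid_pt p x) -> Z <> [::] ->
  has_section p (m + 5) Z b -> has_section p m Z b.-1.
Proof.
move=> hZ Zne hs.
have b0 : (0 < b)%N by apply: has_section_pos Zne hs; rewrite addnS.
have [|F [nzF hF hFp hFZ]] := exists_lowered_section (e := 3) hZ _ hs; first lia.
exists F; split; first split => //.
- by have -> : (3 * b.-1 = 3 * b - 3)%N by lia.
- by apply: vanish_ordW hFp; lia.
by move=> [q|A] /hFZ /=; apply: vanish_ordW; lia.
Qed.

Definition linform (r : 'rV[C]_3) : {mpoly C[3]} := \sum_(i < 3) r 0 i *: 'X_i.

Lemma dhomog_linform r : linform r \is 1.-homog.
Proof.
by apply: rpred_sum => i _; apply: dhomogZ; rewrite dhomogX /= mdeg1.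
Qed.

Lemma mcoeff_linform r (i : 'I_3) : (linform r)@_U_(i) = r 0 i.
Proof.
rewrite raddf_sum (bigD1 i) //= big1 => [|j ji]; rewrite mcoeffZ mcoeffXU.
  by rewrite eqxx mulr1 addr0.
by rewrite (negbTE ji) mulr0.
Qed.

Lemma linform_eq0 r : (linform r == 0) = (r == 0).
Proof.
apply/eqP/eqP => [r0|->].
  by apply/rowP => i; rewrite -mcoeff_linform r0 mcoeff0 mxE.
by rewrite /linform big1 // => i _; rewrite mxE scale0r.
Qed.

Lemma vanish_ord_linform_comp k r (lq : 3.-tuple {mpoly C[k]}) :
  r *m \col_i (tnth lq i)@_0%MM = 0 -> vanish_ord (linform r \mPo lq) 1.
Proof.
move=> /(congr1 (fun M : 'M_1 => M 0 0)); rewrite !mxE => r_lq0.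
have -> : linform r \mPo lq = \sum_(i < 3) r 0 i *: tnth lq i.
  rewrite rmorph_sum; apply: eq_bigr => i _.
  by rewrite /= comp_mpolyZ comp_mpolyXU -tnth_nth.
apply/vanish_ord1; rewrite -r_lq0 raddf_sum; apply: eq_bigr => i _.
by rewrite /= mcoeffZ mxE.
Qed.

Lemma shift3_const q : \col_i (tnth (shift3 q) i)@_0%MM = q.
Proof.
apply/colP => i; rewrite mxE tnth_mktuple mcoeffD mcoeffC mcoeffX eqxx mulr1.
by rewrite -mdeg_eq0 mdeg1 addr0.
Qed.

Lemma chart_const A : \col_i (tnth (chart A) i)@_0%MM = col 0 A.
Proof.
apply/colP => i; rewrite !mxE tnth_mktuple !mcoeffD mcoeffC eqxx mulr1 -mulrA.
by rewrite !(proj1 (vanish_ord1 _) (vanish_ordXM (@vanish_ord0 _ _))) !addr0.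
Qed.

Lemma exists_line (p q : vec3) :
  exists r : 'rV[C]_3, [&& r != 0, r *m p == 0 & r *m q == 0].
Proof.
have : kermx (row_mx p q) != 0.
  rewrite -mxrank_eq0 mxrank_ker; have := rank_leq_col (row_mx p q); lia.
case/rowV0Pn => r /sub_kermxP; rewrite mul_mx_row => /eqP.
by rewrite row_mx_eq0 => /andP [rp rq] nz; exists r; rewrite nz rp rq.
Qed.

Definition line_through (p q : vec3) : 'rV[C]_3 := xchoose (exists_line p q).

Lemma line_throughP p q :
  [/\ line_through p q != 0, line_through p q *m p = 0 & line_through p q *m q = 0].
Proof. by have /and3P [? /eqP ? /eqP ?] := xchooseP (exists_line p q). Qed.

Definition blowdown (p : vec3) (x : S1pt) : vec3 :=
  match x with OffE q => q | OnE _ => p end.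

Definition lines_through (p : vec3) (Z : seq S1pt) : {mpoly C[3]} :=
  \prod_(x <- Z) linform (line_through p (blowdown p x)).

Lemma lines_through_neq0 p Z : lines_through p Z != 0.
Proof.
elim: Z => [|x Z IH]; first by rewrite /lines_through big_nil oner_neq0.
rewrite /lines_through big_cons mulf_neq0 // linform_eq0.
by case: (line_throughP p (blowdown p x)).
Qed.

Lemma dhomog_lines_through p Z : lines_through p Z \is (size Z).-homog.
Proof.
rewrite /lines_through; elim: Z => [|x Z IH]; first by rewrite big_nil dhomog1.
by rewrite big_cons; apply: dhomogM (dhomog_linform _) IH.
Qed.

Lemma exists_section p m Z : Z <> [::] ->
  (forall x, List.In x Z -> valid_pt p x) -> has_section p m Z (size Z * m).
Proof.
move=> Zne hZ; have Z0 : (0 < size Z)%N by case: Z Zne hZ.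
pose l x := linform (line_through p (blowdown p x)).
have l_at q x : line_through p (blowdown p x) *m q = 0 ->
    vanish_ord (l x \mPo shift3 q) 1.
  by move=> lq; apply: vanish_ord_linform_comp; rewrite shift3_const.
have l_p x : vanish_ord (l x \mPo shift3 p) 1.
  by apply: l_at; case: (line_throughP p (blowdown p x)).
exists (lines_through p Z ^+ (3 * m)); split; first split.
- by rewrite expf_neq0 // lines_through_neq0.
- by rewrite mulnCA; apply/dhomogMn/dhomog_lines_through.
- rewrite rmorphXn rmorph_prod.
  by apply: vanish_ordW (vanish_ordXn (vanish_ord_prod (fun x _ => l_p x))); nia.
move=> [q|A] xZ /=; rewrite rmorphXn rmorph_prod.
  have l_q : vanish_ord (l (OffE q) \mPo shift3 q) 1.
    by apply: l_at; case: (line_throughP p q).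
  by apply: vanish_ordW (vanish_ordXn (vanish_ord_prod_mem xZ l_q)); nia.
have [_ colA] := hZ _ xZ.
apply: vanish_ordW (vanish_ordXn (vanish_ord_prod (r := Z) _)); first nia.
move=> y _; apply: vanish_ord_linform_comp; rewrite chart_const colA.
by case: (line_throughP p (blowdown p y)).
Qed.

Lemma is_alpha_exists p m Z d : has_section p m Z d -> exists a, is_alpha p m Z a.
Proof.
move=> hd; have [a [[ha amin] _]] :=
  dec_inh_nat_subset_has_unique_least_element _ (fun _ => classic _) (ex_intro _ d hd).
by exists a; split => // d' /amin /leP.
Qed.

Theorem corollary3 (p : vec3) (hp : p != 0%R) (Z : seq S1pt)
    (hZne : Z <> [::]) (hZ : forall x, List.In x Z -> valid_pt p x)
    (m : nat) (hm : (0 < m)%N) :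
  exists a b, [/\ is_alpha p m Z a, is_alpha p (m + 5) Z b & (a < b)%N].
Proof.
have [a alpha_a] := is_alpha_exists (exists_section m hZne hZ).
have [b alpha_b] := is_alpha_exists (exists_section (m + 5) hZne hZ).
exists a, b; split=> //; case: alpha_a alpha_b => _ amin [hb _].
have b0 : (0 < b)%N by apply: has_section_pos hZne hb; rewrite addnS.
have := amin _ (has_section_pred hZ hZne hb); lia.
Qed.
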